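(* Let $d\ge 1$ and let $z=(W,Y,T)$ be drawn from a distribution $\mathcal{D}$, with features $W\in\mathcal{W}$, real outcome $Y\in\mathbb{R}$ and treatment encoding $T\in\mathbb{R}^d$, satisfying $$Y = T^{\top}\theta_0(W) + f_0(W) + \epsilon_1,\qquad \mathbb{E}[\epsilon_1\mid W,T]=0,$$ $$T = e_0(W)+\epsilon_2,\qquad \mathbb{E}[\epsilon_2\mid W]=\mathbf{0}_d,$$ for functions $\theta_0:\mathcal{W}\to\mathbb{R}^d$, $f_0:\mathcal{W}\to\mathbb{R}$, $e_0:\mathcal{W}\to\mathbb{R}^d$. Let $m_0(w)=\mathbb{E}[Y\mid W=w]$ and $g_0=(m_0,e_0)$. For $\theta:\mathcal{W}\to\mathbb{R}^d$, $m:\mathcal{W}\to\mathbb{R}$, $e:\mathcal{W}\to\mathbb{R}^d$, define the R-loss $$l(\theta,m,e;z)=\Big(Y-m(W)-\big(T-e(W)\big)^{\top}\theta(W)\Big)^2,\qquad L_{\mathcal{D}}(\theta,m,e)=\mathbb{E}_{z\sim\mathcal{D}}[l(\theta,m,e;z)],$$ and write $L_{\mathcal{D}}(\theta,g)$ for $L_{\mathcal{D}}(\theta,m,e)$ when $g=(m,e)$. Let $\Theta$ be a class of functions $\mathcal{W}\to\mathbb{R}^d$ such that $|\theta(W)_i|\le M$ for all $W$, all $\theta\in\Theta$ and all $i\in\{1,\dots,d\}$, and let $\theta^*\in\arg\min_{\theta\in\Theta}L_{\mathcal{D}}(\theta,m_0,e_0)$. Given a sample $S=z_1,\dots,z_n$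 of i.i.d. draws from $\mathcal{D}$, split it into $S_1=z_1,\dots,z_{\lfloor n/2\rfloor}$ and $S_2=S\setminus S_1$. Suppose the nuisance model $g=(m,e)$ is fitted on $S_1$ by a procedure guaranteeing that, for every $\delta\in(0,1)$, with probability at least $1-\delta$, $\|g-g_0\|_{L_2}\triangleq\sqrt{\mathbb{E}_{z\sim\mathcal{D}}\|g(W)-g_0(W)\|_2^2}\le \mathrm{Rate}_{\mathcal{D}}(S_1,\delta)$; and suppose $\theta\in\Theta$ is then fitted on $S_2$ using $g$ in the loss, by a procedure guaranteeing that, for every $\delta\in(0,1)$, with probability at least $1-\delta$, $L_{\mathcal{D}}(\theta,g)-L_{\mathcal{D}}(\theta^*,g)\le \mathrm{Rate}_{\mathcal{D}}(S_2,\delta;\theta,g)$. Then with probability at least $1-\delta$, $$\mathbb{E}\Big[\big(T-e_0(W)\big)^{\top}\big(\theta(W)-\theta^*(W)\big)\Big]^2\le L_{\mathcal{D}}(\theta,g_0)-L_{\mathcal{D}}(\theta^*,g_0)\le \mathrm{Rate}_{\mathcal{D}}(S_2,\delta/2;\theta,g)+2(1+dM^2)\,\mathrm{Rate}_{\mathcal{D}}(S_1,\delta/2)^2.$$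
   Context: This is a treatment-effect estimation setting (here applied at each time step of a time series, with $W$ the conditioning features). The treatment encoding $T\in\mathbb{R}^d$ may be a one-hot vector of a categorical treatment, a cumulative encoding (ones in coordinates $1,\dots,i$ and zeros afterwards for treatment level $i$), or a scalar real treatment ($d=1$); $\theta_0(W)$ is the vector of treatment effects. $\mathrm{Rate}_{\mathcal{D}}(S_1,\delta)$ and $\mathrm{Rate}_{\mathcal{D}}(S_2,\delta;\theta,g)$ denote arbitrary high-probability error bounds of the respective fitting procedures, as specified in the claim. $L_{\mathcal{D}}(\theta,g_0)$ denotes the population R-loss evaluated with the true nuisance functions $(m_0,e_0)$. *)

From HB Require Import structures.
From mathcomp Require Import all_boot all_order all_algebra.
From mathcomp Require Import all_classical all_reals all_analysis.
Set Implicit Arguments. Unset Strict Implicit. Unset Printing Implicit Defensive.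
Import Order.TTheory GRing.Theory Num.Theory.
Local Open Scope classical_set_scope.
Local Open Scope ring_scope.

Section RLearner.
Context {R : realType} {dW dZ dO : measure_display}
  {Wt : measurableType dW} {Z : measurableType dZ} {Om : measurableType dO}.
Variable d : nat.

Definition nuisance := ((Wt -> R) * (Wt -> 'I_d -> R))%type.

Definition sigmaW (Wf : Z -> Wt) : set (set Z) :=
  <<s preimage_set_system setT Wf measurable >>.

Definition sigmaWT (Wf : Z -> Wt) (Tf : Z -> 'I_d -> R) : set (set Z) :=
  <<s [set X | exists (A : set Wt) (B : 'I_d -> set R),
        [/\ measurable A, (forall i, measurable (B i)) &
            X = Wf @^-1` A `&` [set z | forall i, B i (Tf z i)]]] >>.

(* E[X | G] = 0 (a.s.), G a sub-sigma-algebra: X integrable and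
   E[X 1_A] = 0 for every A in G *)
Definition cond_mean_zero (D : probability Z R) (G : set (set Z)) (X : Z -> R) :=
  D.-integrable setT (EFin \o X) /\
  forall A, G A -> (\int[D]_(z in A) (X z)%:E = 0)%E.

Definition rloss (Wf : Z -> Wt) (Yf : Z -> R) (Tf : Z -> 'I_d -> R)
  (th : Wt -> 'I_d -> R) (g : nuisance) (z : Z) : R :=
  (Yf z - g.1 (Wf z) - \sum_(i < d) (Tf z i - g.2 (Wf z) i) * th (Wf z) i) ^+ 2.

Definition Lrisk (D : probability Z R) (Wf : Z -> Wt) (Yf : Z -> R)
  (Tf : Z -> 'I_d -> R) (th : Wt -> 'I_d -> R) (g : nuisance) : \bar R :=
  (\int[D]_z (rloss Wf Yf Tf th g z)%:E)%E.

Definition L2dist (D : probability Z R) (Wf : Z -> Wt) (g g0 : nuisance) : \bar R :=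
  (Lnorm D 2%:E (fun z => (Num.sqrt ((g.1 (Wf z) - g0.1 (Wf z)) ^+ 2 +
       \sum_(i < d) (g.2 (Wf z) i - g0.2 (Wf z) i) ^+ 2))%:E))%E.

Definition iid_sample (P : probability Om R) (D : probability Z R)
  (S : Om -> nat -> Z) (n : nat) :=
  (forall i, (i < n)%N ->
     measurable_fun setT (fun w => S w i) /\
     forall A, measurable A -> P ((fun w => S w i) @^-1` A) = D A) /\
  (forall A : nat -> set Z, (forall i, measurable (A i)) ->
     P [set w | forall i, (i < n)%N -> A i (S w i)] =
     (\prod_(i < n) P ((fun w => S w i) @^-1` A i))%E).

Definition firsthalf (S : Om -> nat -> Z) (n : nat) (w : Om) : seq Z :=
  [seq S w i | i <- iota 0 n./2].
Definition secondhalf (S : Om -> nat -> Z) (n : nat) (w : Om) : seq Z :=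
  [seq S w i | i <- iota n./2 (n - n./2)].

Definition wp_atleast (P : probability Om R) (delta : R) (E : set Om) :=
  exists F : set Om, [/\ measurable F, ((1 - delta)%:E <= P F)%E & F `<=` E].

End RLearner.

(* With u = Y - m0(W) and eps = T - e0(W), the R-loss of theta at the true
   nuisances is E[r_theta^2] with r_theta = u - eps^T theta(W), while at
   g = (m, e) the integrand is (r_theta + b_theta(W))^2 with
   b_theta = (e - e0)^T theta - (m - m0).  Since E[u | W] = 0 and E[eps | W] = 0,
   r_theta is orthogonal to every square-integrable function of W, hence
   L(theta, g) = L(theta, g0) + E[b_theta(W)^2], and Cauchy-Schwarz with
   |theta_i| <= M gives E[b_theta(W)^2] <= 2 (1 + d M^2) ||g - g0||^2.
   Subtracting these decompositions for theta and theta* transfers the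
   excess-risk bound from g to g0.  The same orthogonality makes
   E[eps^T (theta(W) - theta*(W))] vanish, so the lower bound is the optimality of
   theta*.  A union bound over the two events of probability 1 - delta/2
   concludes.
   The conditional-mean-zero hypotheses only give E[X 1_A(W)] = 0; they are
   extended to E[X h(W)] = 0 by approximating h^+ and h^- with simple
   functions. *)

From HB Require Import structures.
From mathcomp Require Import all_boot all_order all_algebra.
From mathcomp Require Import all_classical all_reals all_analysis.
From mathcomp Require Import measurable_realfun ring lra.
Set Implicit Arguments. Unset Strict Implicit. Unset Printing Implicit Defensive.
Import Order.TTheory GRing.Theory Num.Theory.
Local Open Scope classical_set_scope.
Local Open Scope ring_scope.

Section square_integrable.
Context {R : realType} {dZ : measure_display} {Z : measurableType dZ}
  (D : probability Z R).
Implicit Types (f g h : Z -> R) (c : R).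

Definition mean f : R := fine (\int[D]_z (f z)%:E).
Definition L1 f := D.-integrable setT (EFin \o f).
Definition L2 f := measurable_fun setT f /\ L1 (fun z => f z ^+ 2).

Lemma L1_integralE f : L1 f -> (\int[D]_z (f z)%:E)%E = (mean f)%:E.
Proof. by move=> hf; rewrite /mean fineK //; exact: integrable_fin_num hf. Qed.

Lemma L1_le f g : measurable_fun setT f -> L1 g ->
  (forall z, `|f z| <= `|g z|) -> L1 f.
Proof.
move=> mf ig fg; apply: le_integrable ig => //; first exact/measurable_EFinP.
by move=> z _ /=; rewrite lee_fin.
Qed.

Lemma L1_cst c : L1 (fun=> c).
Proof. exact: finite_measure_integrable_cst. Qed.

Lemma L1D f g : L1 f -> L1 g -> L1 (fun z => f z + g z).
Proof.
by move=> hf hg; apply: eq_integrable (integrableD measurableT hf hg).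
Qed.

Lemma L1Z k f : L1 f -> L1 (fun z => k * f z).
Proof.
by move=> hf; apply: eq_integrable (integrableZl measurableT k hf).
Qed.

Lemma L1N f : L1 f -> L1 (fun z => - f z).
Proof.
move=> hf; apply: eq_integrable (L1Z (-1) hf) => // z _.
by rewrite /= mulN1r.
Qed.

Lemma L1_sum (I : Type) (s : seq I) (F : I -> Z -> R) :
  (forall i, L1 (F i)) -> L1 (fun z => \sum_(i <- s) F i z).
Proof.
move=> hF; elim: s => [|i s IH].
  by under eq_fun do rewrite big_nil; exact: L1_cst.
by under eq_fun do rewrite big_cons; exact: L1D.
Qed.

Lemma meanD f g : L1 f -> L1 g -> mean (fun z => f z + g z) = mean f + mean g.
Proof.
move=> hf hg; apply: EFin_inj; rewrite -L1_integralE; last exact: L1D.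
rewrite EFinD -!L1_integralE //; under eq_integral do rewrite EFinD.
exact: integralD.
Qed.

Lemma meanZ k f : L1 f -> mean (fun z => k * f z) = k * mean f.
Proof.
move=> hf; apply: EFin_inj; rewrite -L1_integralE; last exact: L1Z.
rewrite EFinM -!L1_integralE //; under eq_integral do rewrite EFinM.
exact: integralZl.
Qed.

Lemma meanN f : L1 f -> mean (fun z => - f z) = - mean f.
Proof.
by move=> hf; rewrite -mulN1r -meanZ //; congr mean; apply/funext => z; ring.
Qed.

Lemma mean_sum (I : Type) (s : seq I) (F : I -> Z -> R) :
  (forall i, L1 (F i)) ->
  mean (fun z => \sum_(i <- s) F i z) = \sum_(i <- s) mean (F i).
Proof.
move=> hF; elim: s => [|i s IH].
  by under eq_fun do rewrite big_nil; rewrite big_nil /mean integral0.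
under eq_fun do rewrite big_cons.
by rewrite meanD ?IH ?big_cons //; exact: L1_sum.
Qed.

Lemma le_mean f g : L1 f -> L1 g -> (forall z, f z <= g z) -> mean f <= mean g.
Proof.
move=> hf hg fg; rewrite -lee_fin -!L1_integralE //.
by apply: le_integral => // z _; rewrite lee_fin.
Qed.

Lemma mean_ge0 f : (forall z, 0 <= f z) -> 0 <= mean f.
Proof.
by move=> f0; apply/fine_ge0/integral_ge0 => z _; rewrite lee_fin.
Qed.

Lemma L2_mul f g : L2 f -> L2 g -> L1 (fun z => f z * g z).
Proof.
move=> [mf hf] [mg hg].
apply: (L1_le (g := fun z => f z ^+ 2 + g z ^+ 2)).
- exact: measurable_funM.
- exact: L1D.
move=> z; rewrite [X in _ <= X]ger0_norm ?addr_ge0 ?sqr_ge0 //.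
rewrite normrM -[f z ^+ 2]real_normK ?num_real // -[g z ^+ 2]real_normK ?num_real //.
by have := sqr_ge0 (`|f z| - `|g z|); nra.
Qed.

Lemma L2D f g : L2 f -> L2 g -> L2 (fun z => f z + g z).
Proof.
move=> [mf hf] [mg hg]; split; first exact: measurable_funD.
apply: (L1_le (g := fun z => 2 * f z ^+ 2 + 2 * g z ^+ 2)).
- exact/measurable_funX/measurable_funD.
- by apply: L1D; apply: L1Z.
move=> z; rewrite ger0_norm ?sqr_ge0 // ger0_norm; last first.
  by rewrite addr_ge0 // mulr_ge0 // sqr_ge0.
by have := sqr_ge0 (f z - g z); nra.
Qed.

Lemma L2Z k f : L2 f -> L2 (fun z => k * f z).
Proof.
move=> [mf hf]; split; first exact: measurable_funM.
by apply: eq_integrable (L1Z (k ^+ 2) hf) => // z _; rewrite /= exprMn.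
Qed.

Lemma L2N f : L2 f -> L2 (fun z => - f z).
Proof. by move=> /(L2Z (-1)); under eq_fun do rewrite mulN1r. Qed.

Lemma L2B f g : L2 f -> L2 g -> L2 (fun z => f z - g z).
Proof. by move=> hf hg; apply/L2D/L2N. Qed.

Lemma L2_cst c : L2 (fun=> c).
Proof. by split; [exact: measurable_cst | exact: L1_cst]. Qed.

Lemma L2_sum (I : Type) (s : seq I) (F : I -> Z -> R) :
  (forall i, L2 (F i)) -> L2 (fun z => \sum_(i <- s) F i z).
Proof.
move=> hF; elim: s => [|i s IH].
  by under eq_fun do rewrite big_nil; exact: L2_cst.
by under eq_fun do rewrite big_cons; exact: L2D.
Qed.

Lemma L2_mul_bounded f h c : L2 f -> measurable_fun setT h ->
  (forall z, `|h z| <= c) -> L2 (fun z => f z * h z).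
Proof.
move=> [mf hf] mh hc; split; first exact: measurable_funM.
apply: (L1_le (g := fun z => c ^+ 2 * f z ^+ 2)); [|exact: L1Z|].
  exact/measurable_funX/measurable_funM.
move=> z; rewrite !ger0_norm ?sqr_ge0 //; last by rewrite mulr_ge0 // sqr_ge0.
rewrite exprMn mulrC.
rewrite ler_wpM2r ?sqr_ge0 // -[h z ^+ 2]real_normK ?num_real //.
by have := hc z; have := normr_ge0 (h z); nra.
Qed.

Lemma L2_bounded h c : measurable_fun setT h -> (forall z, `|h z| <= c) -> L2 h.
Proof. by move=> mh /(L2_mul_bounded (L2_cst 1) mh); under eq_fun do rewrite mul1r. Qed.

Lemma mean_sqrD f g : L2 f -> L2 g ->
  mean (fun z => (f z + g z) ^+ 2) =
  mean (fun z => f z ^+ 2) + 2 * mean (fun z => f z * g z) + mean (fun z => g z ^+ 2).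
Proof.
move=> hf hg; have hfg := L2_mul hf hg.
have -> : (fun z => (f z + g z) ^+ 2) =
    (fun z => (f z ^+ 2 + 2 * (f z * g z)) + g z ^+ 2).
  by apply/funext => z; ring.
rewrite meanD; [|by apply: L1D; [exact: hf.2 | exact: L1Z] | exact: hg.2].
by rewrite meanD ?meanZ //; [exact: hf.2 | exact: L1Z].
Qed.

End square_integrable.

Section integral_comp_mul.
Context {R : realType} {dW dZ : measure_display} {Wt : measurableType dW}
  {Z : measurableType dZ} (mu : measure Z R) (Wf : Z -> Wt).
Hypothesis mW : measurable_fun setT Wf.
Local Open Scope ereal_scope.
Import HBNNSimple.

Let measurable_preimage (B : set Wt) : measurable B -> measurable (Wf @^-1` B).
Proof. by move=> mB; rewrite -[_ @^-1` _]setTI; exact: mW. Qed.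

Lemma integral_comp_nnsfunM (h : {nnsfun Wt >-> R}) (g : Z -> \bar R) :
  measurable_fun setT g -> (forall z, 0 <= g z) ->
  \int[mu]_z ((h (Wf z))%:E * g z) =
  \sum_(r \in range h) (r%:E * \int[mu]_(z in Wf @^-1` (h @^-1` [set r])) g z).
Proof.
move=> mg g0.
transitivity (\int[mu]_z (\sum_(r \in range h)
    ((r * \1_(h @^-1` [set r]) (Wf z))%:E * g z))).
  apply: eq_integral => z _.
  rewrite fimfunE -fsumEFin // ge0_mule_fsuml // => r.
  exact: nnfun_muleindic_ge0.
rewrite ge0_integral_fsum //; last 2 first.
- move=> r; apply: emeasurable_funM => //; apply/measurable_EFinP.
  by apply: measurable_funM => //; exact: measurableT_comp.
- by move=> r z _; rewrite mule_ge0 // EFinM; exact: nnfun_muleindic_ge0.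
apply: eq_fsbigr => r; rewrite inE => -[w _ hw].
have r0 : 0 <= r%:E by rewrite -hw lee_fin.
transitivity (\int[mu]_z (r%:E * (g \_ (Wf @^-1` (h @^-1` [set r]))) z)).
  apply: eq_integral => z _; rewrite epatch_indic /=.
  by rewrite EFinM -muleA; congr (_ * _); rewrite muleC.
rewrite ge0_integralZl //; last 2 first.
- rewrite epatch_indic; apply: emeasurable_funM => //.
  by apply/measurable_EFinP/measurable_indic/measurable_preimage/measurable_funPTI.
- by move=> z _; rewrite /patch; case: ifP.
by rewrite -integral_mkcondr setTI.
Qed.

Lemma integral_compM_approx (f : Wt -> \bar R) (mf : measurable_fun setT f)
    (g : Z -> \bar R) :
  (forall w, 0 <= f w) -> measurable_fun setT g -> (forall z, 0 <= g z) ->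
  (forall z, g z \is a fin_num) ->
  \int[mu]_z (f (Wf z) * g z) =
  limn (fun n => \int[mu]_z ((nnsfun_approx measurableT mf n (Wf z))%:E * g z)).
Proof.
move=> f0 mg g0 gfin; rewrite -monotone_convergence //; last 3 first.
- move=> n; apply: emeasurable_funM => //; apply/measurable_EFinP.
  by apply: measurableT_comp => //; exact: measurable_funPT.
- by move=> n z _; rewrite mule_ge0 // lee_fin.
- move=> z _ a b ab; rewrite lee_wpmul2r // lee_fin.
  exact/lefP/nd_nnsfun_approx.
apply: eq_integral => z _; apply/esym/cvg_lim => //; apply: cvgeZr => //.
exact: (cvg_nnsfun_approx measurableT mf (fun w _ => f0 w)).
Qed.

Lemma integral_compM_eq (g1 g2 : Z -> \bar R) (f : Wt -> \bar R) :
  measurable_fun setT g1 -> measurable_fun setT g2 ->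
  (forall z, 0 <= g1 z) -> (forall z, 0 <= g2 z) ->
  (forall z, g1 z \is a fin_num) -> (forall z, g2 z \is a fin_num) ->
  (forall B, measurable B ->
     \int[mu]_(z in Wf @^-1` B) g1 z = \int[mu]_(z in Wf @^-1` B) g2 z) ->
  measurable_fun setT f -> (forall w, 0 <= f w) ->
  \int[mu]_z (f (Wf z) * g1 z) = \int[mu]_z (f (Wf z) * g2 z).
Proof.
move=> m1 m2 p1 p2 f1 f2 g12 mf f0.
rewrite (integral_compM_approx mf f0 m1 p1 f1) (integral_compM_approx mf f0 m2 p2 f2).
congr (limn _); apply/funext => n; rewrite !integral_comp_nnsfunM //.
by apply: eq_fsbigr => r _; rewrite g12 //; exact: measurable_funPTI.
Qed.

End integral_comp_mul.

Section funrposM.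
Context {T : Type} {R : realDomainType}.
Implicit Types f g : T -> R.

Lemma funrposM f g : (f \* g)^\+ = f^\+ \* g^\+ \+ f^\- \* g^\-.
Proof.
apply/funext => x; rewrite /funrpos /funrneg /= !maxEle.
have [hf|hf] := lerP (f x) 0; have [hg|hg] := lerP (g x) 0.
all: by repeat case: ifP => ?; nra.
Qed.

Lemma funrnegM f g : (f \* g)^\- = f^\+ \* g^\- \+ f^\- \* g^\+.
Proof.
apply/funext => x; rewrite /funrpos /funrneg /= !maxEle.
have [hf|hf] := lerP (f x) 0; have [hg|hg] := lerP (g x) 0.
all: by repeat case: ifP => ?; nra.
Qed.

End funrposM.

Section cond_mean_zero.
Context {R : realType} {dW dZ : measure_display} {Wt : measurableType dW}
  {Z : measurableType dZ} (D : probability Z R) (Wf : Z -> Wt).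
Hypothesis mW : measurable_fun setT Wf.
Variable X : Z -> R.
Hypothesis X0 : cond_mean_zero D (sigmaW Wf) X.

Let mX : measurable_fun setT X.
Proof. by case: X0 => /integrableP[/measurable_EFinP]. Qed.

Lemma cond_mean_zero_funrpos (B : set Wt) : measurable B ->
  (\int[D]_(z in Wf @^-1` B) (X^\+ z)%:E = \int[D]_(z in Wf @^-1` B) (X^\- z)%:E)%E.
Proof.
case: X0 => iX intX0 mB.
have mWB : measurable (Wf @^-1` B) by rewrite -[_ @^-1` _]setTI; exact: mW.
have iXB := integrableS measurableT mWB (@subsetT _ _) iX.
have sB : sigmaW Wf (Wf @^-1` B) by apply: sub_sigma_algebra; exists B; rewrite ?setTI.
have /eqP := intX0 _ sB.
rewrite integralE funerpos funerneg sube_eq ?add0e; first by move/eqP.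
- by apply: integrable_fin_num => //; exact: integrable_funrpos.
- exact: fin_num_adde_defr.
Qed.

Lemma cond_mean_zero_compM (f : Wt -> R) :
  measurable_fun setT f -> (forall w, 0 <= f w) ->
  (\int[D]_z (X^\+ z * f (Wf z))%:E = \int[D]_z (X^\- z * f (Wf z))%:E)%E.
Proof.
move=> mf f0; under eq_integral do rewrite EFinM muleC.
under [RHS]eq_integral do rewrite EFinM muleC.
apply: (integral_compM_eq mW (f := EFin \o f)).
- exact/measurable_EFinP/measurable_funrpos.
- exact/measurable_EFinP/measurable_funrneg.
- by move=> z; rewrite lee_fin funrpos_ge0.
- by move=> z; rewrite lee_fin funrneg_ge0.
- by [].
- by [].
- exact: cond_mean_zero_funrpos.
- exact/measurable_EFinP.
- by move=> w; rewrite lee_fin.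
Qed.

Lemma cond_mean_zero_orth (h : Wt -> R) : measurable_fun setT h ->
  D.-integrable setT (EFin \o (X \* (h \o Wf))) ->
  (\int[D]_z (X z * h (Wf z))%:E = 0)%E.
Proof.
move=> mh iXh.
have mhW (k : Wt -> R) : measurable_fun setT k -> measurable_fun setT (k \o Wf).
  by move=> mk; exact: measurableT_comp.
have integralD_ge0 (a b a' b' : Z -> R) :
    measurable_fun setT a -> measurable_fun setT b ->
    measurable_fun setT a' -> measurable_fun setT b' ->
    (forall z, 0 <= a z) -> (forall z, 0 <= b z) ->
    (forall z, 0 <= a' z) -> (forall z, 0 <= b' z) ->
    (\int[D]_z ((a \* b \+ a' \* b') z)%:E =
     \int[D]_z (a z * b z)%:E + \int[D]_z (a' z * b' z)%:E)%E.
  move=> ma mb ma' mb' a0 b0 a0' b0'; rewrite -ge0_integralD //.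
  - by move=> z _; rewrite lee_fin mulr_ge0.
  - exact/measurable_EFinP/measurable_funM.
  - by move=> z _; rewrite lee_fin mulr_ge0.
  - exact/measurable_EFinP/measurable_funM.
have mXp := measurable_funrpos mX; have mXn := measurable_funrneg mX.
have mhp := mhW _ (measurable_funrpos mh); have mhn := mhW _ (measurable_funrneg mh).
have [Xp0 Xn0] := (funrpos_ge0 X, funrneg_ge0 X).
have [hp0 hn0] := (fun z => funrpos_ge0 h (Wf z), fun z => funrneg_ge0 h (Wf z)).
have pos_eq_neg : (\int[D]_z ((EFin \o (X \* (h \o Wf))%R)^\+ z) =
                   \int[D]_z ((EFin \o (X \* (h \o Wf))%R)^\- z))%E.
  rewrite funerpos funerneg funrposM funrnegM /=.
  rewrite !integralD_ge0 //.
  rewrite (cond_mean_zero_compM (measurable_funrpos mh) (funrpos_ge0 h)).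
  by rewrite -(cond_mean_zero_compM (measurable_funrneg mh) (funrneg_ge0 h)) addeC.
rewrite integralE pos_eq_neg subee // -pos_eq_neg.
exact: integrable_fin_num (integrable_funepos measurableT iXh).
Qed.

Lemma cond_mean_zero_mean (h : Wt -> R) : measurable_fun setT h ->
  L1 D (fun z => X z * h (Wf z)) -> mean D (fun z => X z * h (Wf z)) = 0.
Proof. by move=> mh iXh; rewrite /mean cond_mean_zero_orth. Qed.

End cond_mean_zero.

Definition clamp {R : realFieldType} (n : nat) (a : R) : R :=
  Num.min (Num.max a (- n%:R)) n%:R.

Section clamp.
Context {R : realFieldType}.
Implicit Types (a : R) (n : nat).

Lemma clamp_cases n a :
  [\/ a <= - n%:R /\ clamp n a = - n%:R,
      - n%:R <= a <= n%:R /\ clamp n a = a |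
      n%:R <= a /\ clamp n a = n%:R].
Proof.
have n0 : 0 <= n%:R :> R by [].
have nn : - n%:R <= n%:R :> R by lra.
rewrite /clamp !maxEle !minEle; have [h1|h1] := lerP a (- n%:R).
  by apply: Or31; split => //; rewrite nn.
have [h2|h2] := lerP a n%:R.
  by apply: Or32; split; [apply/andP; split; lra|].
by apply: Or33; split => //; lra.
Qed.

Lemma clamp_norm n a : `|clamp n a| <= n%:R.
Proof.
have n0 : 0 <= n%:R :> R by [].
rewrite ler_norml; apply/andP.
by case: (clamp_cases n a) => -[h ->]; [|move: h => /andP[h h']|]; split; lra.
Qed.

Lemma clamp_sqr_le n a : clamp n a ^+ 2 <= a * clamp n a.
Proof.
have n0 : 0 <= n%:R :> R by [].
by case: (clamp_cases n a) => -[h ->]; [|move: h => /andP[h h']|]; nra.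
Qed.

Lemma clamp_sqr_homo a :
  {homo (fun n => clamp n a ^+ 2) : m n / (m <= n)%N >-> m <= n}.
Proof.
move=> m n mn; have mn' : m%:R <= n%:R :> R by rewrite ler_nat.
have m0 : 0 <= m%:R :> R by [].
by case: (clamp_cases m a) => -[h ->]; case: (clamp_cases n a) => -[k ->];
  try move: h => /andP[h h']; try move: k => /andP[k k']; nra.
Qed.

Lemma clamp_id n a : `|a| <= n%:R -> clamp n a = a.
Proof.
rewrite ler_norml => /andP[h1 h2].
by case: (clamp_cases n a) => -[h ->] //; lra.
Qed.

End clamp.

Section cond_mean_zero_L2.
Context {R : realType} {dW dZ : measure_display} {Wt : measurableType dW}
  {Z : measurableType dZ} (D : probability Z R) (Wf : Z -> Wt).
Hypothesis mW : measurable_fun setT Wf.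
Variables (Y : Z -> R) (m : Wt -> R).
Hypotheses (L2Y : L2 D Y) (mm : measurable_fun setT m).
Hypothesis Ym0 : cond_mean_zero D (sigmaW Wf) (fun z => Y z - m (Wf z)).

Let measurable_clamp n : measurable_fun setT (fun w => clamp n (m w)).
Proof. by apply: measurable_minr => //; exact: measurable_maxr. Qed.

Let measurable_clampW n : measurable_fun setT (fun z => clamp n (m (Wf z))).
Proof. exact: measurableT_comp (measurable_clamp n) mW. Qed.

(* t = clamp n (m W) is a bounded function of W, hence orthogonal to Y - m W:
   E[t^2] <= E[m(W) t] = E[Y t] <= (E[Y^2] + E[t^2]) / 2. *)
Lemma mean_sqr_clamp_le n :
  mean D (fun z => clamp n (m (Wf z)) ^+ 2) <= mean D (fun z => Y z ^+ 2).
Proof.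
set t := fun z => clamp n (m (Wf z)).
have L2t : L2 D t :=
  L2_bounded D (measurable_clampW n) (fun z => clamp_norm n (m (Wf z))).
have L1Yt : L1 D (fun z => Y z * t z) := L2_mul L2Y L2t.
have L1Xt : L1 D (fun z => (Y z - m (Wf z)) * t z).
  apply: (L1_le (g := fun z => n%:R * (Y z - m (Wf z)))); last 2 first.
  - by apply: L1Z; case: Ym0.
  - move=> z; rewrite !normrM (ger0_norm (ler0n _ n)) [_ * `|_|]mulrC.
    by rewrite ler_wpM2r // clamp_norm.
  apply: measurable_funM; last exact: measurable_clampW.
  by apply: measurable_funB; [case: L2Y | exact: measurableT_comp mm mW].
have mWt : (fun z => m (Wf z) * t z) =
    (fun z => Y z * t z + - ((Y z - m (Wf z)) * t z)).
  by apply/funext => z; ring.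
have L1mt : L1 D (fun z => m (Wf z) * t z) by rewrite mWt; apply/L1D/L1N.
have mean_mt : mean D (fun z => m (Wf z) * t z) = mean D (fun z => Y z * t z).
  rewrite mWt meanD; [|by []|exact: L1N].
  by rewrite meanN // (cond_mean_zero_mean mW Ym0 (measurable_clamp n) L1Xt) subr0.
have le_tm : mean D (fun z => t z ^+ 2) <= mean D (fun z => m (Wf z) * t z).
  by apply: le_mean => //; [exact: L2t.2 | move=> z; exact: clamp_sqr_le].
have le_Yt : mean D (fun z => 2 * (Y z * t z)) <= mean D (fun z => Y z ^+ 2 + t z ^+ 2).
  apply: le_mean; [exact: L1Z | exact: L1D L2Y.2 L2t.2 |].
  by move=> z; have := sqr_ge0 (Y z - t z); nra.
rewrite meanZ // meanD in le_Yt; [|exact: L2Y.2|exact: L2t.2].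
lra.
Qed.

Lemma cond_mean_zero_L2 : L2 D (fun z => m (Wf z)).
Proof.
have mmW : measurable_fun setT (fun z => m (Wf z)) by exact: measurableT_comp.
split => //; apply/integrableP; split; first exact/measurable_EFinP/measurable_funX.
under eq_integral do rewrite gee0_abs ?lee_fin ?sqr_ge0 //.
have -> : (\int[D]_z ((m (Wf z) ^+ 2)%:E) =
    limn (fun n => \int[D]_z ((clamp n (m (Wf z)) ^+ 2)%:E)))%E.
  rewrite -monotone_convergence //; last 3 first.
  - by move=> n; exact/measurable_EFinP/measurable_funX.
  - by move=> n z _; rewrite lee_fin sqr_ge0.
  - by move=> z _ a b ab; rewrite lee_fin; exact: clamp_sqr_homo.
  apply: eq_integral => z _; apply/esym/lim_near_cst => //.
  have [N mN] : exists N : nat, `|m (Wf z)| <= N%:R.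
    by exists (Num.truncn `|m (Wf z)|).+1; apply/ltW/real_truncnS_gt; rewrite num_real.
  near=> n; rewrite clamp_id //; apply: (le_trans mN); rewrite ler_nat.
  by near: n; exact: nbhs_infty_ge.
apply: (@le_lt_trans _ _ (mean D (fun z => Y z ^+ 2))%:E); last exact: ltry.
apply: lime_le.
  apply: ereal_nondecreasing_is_cvgn => a b ab; apply: ge0_le_integral => //.
  - by move=> z _; rewrite lee_fin sqr_ge0.
  - exact/measurable_EFinP/measurable_funX.
  - exact/measurable_EFinP/measurable_funX.
  - by move=> z _; rewrite lee_fin; exact: clamp_sqr_homo.
near=> n; rewrite L1_integralE ?lee_fin ?mean_sqr_clamp_le //.
exact: (L2_bounded D (measurable_clampW n) (fun z => clamp_norm n (m (Wf z)))).2.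
Unshelve. all: by end_near.
Qed.

End cond_mean_zero_L2.

Lemma sqr_sum_le {R : realFieldType} (n : nat) (F : 'I_n -> R) :
  (\sum_(i < n) F i) ^+ 2 <= n%:R * \sum_(i < n) F i ^+ 2.
Proof.
elim: n F => [|n IH] F; first by rewrite !big_ord0 expr0n /= mul0r.
rewrite !big_ord_recr /= -natr1.
have := IH (fun i => F (widen_ord (leqnSn n) i)).
set S := \sum_(i < n) _; set Q := \sum_(i < n) _; set x := F ord_max => IHF.
have Q0 : 0 <= Q by rewrite /Q sumr_ge0 // => i _; exact: sqr_ge0.
have n0 : 0 <= n%:R :> R by [].
(* 2 x S <= n x^2 + S^2 / n <= n x^2 + Q when n > 0, and S = 0 when n = 0. *)
suff cross : 2 * x * S <= Q + n%:R * x ^+ 2 by nra.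
have [n0E|n_gt0] := eqVneq n%:R (0 : R).
  rewrite n0E mul0r in IHF *.
  have -> : S = 0 by apply/eqP; rewrite -sqrf_eq0 eq_le sqr_ge0 andbT.
  lra.
have npos : 0 < n%:R :> R by rewrite lt_def n_gt0 n0.
rewrite -(ler_pM2l npos); have := sqr_ge0 (S - n%:R * x); nra.
Qed.

Lemma sqr_dot_sub_le {R : realFieldType} (d : nat) (M a : R) (b t : 'I_d -> R) :
  (forall i, `|t i| <= M) ->
  (\sum_(i < d) b i * t i - a) ^+ 2 <=
  2 * (1 + d%:R * M ^+ 2) * (a ^+ 2 + \sum_(i < d) b i ^+ 2).
Proof.
move=> tM.
have bt : \sum_(i < d) (b i * t i) ^+ 2 <= M ^+ 2 * \sum_(i < d) b i ^+ 2.
  rewrite mulr_sumr; apply: ler_sum => i _; rewrite exprMn mulrC ler_wpM2r ?sqr_ge0 //.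
  rewrite -[t i ^+ 2]real_normK ?num_real //.
  by have := tM i; have := normr_ge0 (t i); nra.
have := sqr_sum_le (fun i => b i * t i).
have B0 : 0 <= \sum_(i < d) b i ^+ 2 by rewrite sumr_ge0 // => i _; exact: sqr_ge0.
have n0 : 0 <= d%:R :> R by [].
set x := \sum_(i < d) b i * t i; set B := \sum_(i < d) b i ^+ 2 in bt B0 *.
set S := \sum_(i < d) _ in bt *.
have dM0 : 0 <= d%:R * M ^+ 2 by rewrite mulr_ge0 // sqr_ge0.
have := sqr_ge0 (x + a); have := ler_wpM2l n0 bt; have := sqr_ge0 a; nra.
Qed.

Lemma probability_setI_ge {R : realType} {dO : measure_display}
    {Om : measurableType dO} (P : probability Om R) (F1 F2 : set Om) (a b : R) :
  measurable F1 -> measurable F2 ->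
  ((1 - a)%:E <= P F1)%E -> ((1 - b)%:E <= P F2)%E ->
  ((1 - (a + b))%:E <= P (F1 `&` F2))%E.
Proof.
move=> mF1 mF2.
have : (P (~` (F1 `&` F2)) <= P (~` F1) + P (~` F2))%E.
  by rewrite setCI; apply: measureU2; exact: measurableC.
rewrite !probability_setC //; last exact: measurableI.
have finE A : measurable A -> P A = (fine (P A))%:E.
  by move=> mA; rewrite fineK // fin_num_measure.
rewrite (finE _ mF1) (finE _ mF2) (finE _ (measurableI _ _ mF1 mF2)).
rewrite -!EFinB -EFinD !lee_fin; lra.
Qed.

Section rloss_decomposition.
Context {R : realType} {dW dZ : measure_display} {Wt : measurableType dW}
  {Z : measurableType dZ} (d : nat) (D : probability Z R)
  (Wf : Z -> Wt) (Yf : Z -> R) (Tf : Z -> 'I_d -> R)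
  (e0 : Wt -> 'I_d -> R) (m0 : Wt -> R)
  (Theta : set (Wt -> 'I_d -> R)) (M : R).
Hypothesis mW : measurable_fun setT Wf.
Hypothesis L2Y : L2 D Yf.
Hypothesis L2T : forall i, L2 D (fun z => Tf z i).
Hypothesis me0 : forall i, measurable_fun setT (fun w => e0 w i).
Hypothesis e0_cond :
  forall i, cond_mean_zero D (sigmaW Wf) (fun z => Tf z i - e0 (Wf z) i).
Hypothesis mm0 : measurable_fun setT m0.
Hypothesis m0_cond : cond_mean_zero D (sigmaW Wf) (fun z => Yf z - m0 (Wf z)).
Hypothesis mTheta :
  forall th, Theta th -> forall i, measurable_fun setT (fun w => th w i).
Hypothesis Theta_bounded : forall th, Theta th -> forall w i, `|th w i| <= M.

Definition rloss_residual (th : Wt -> 'I_d -> R) z :=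
  Yf z - m0 (Wf z) - \sum_(i < d) (Tf z i - e0 (Wf z) i) * th (Wf z) i.

Let L2_outcome_residual : L2 D (fun z => Yf z - m0 (Wf z)).
Proof. exact: L2B L2Y (cond_mean_zero_L2 mW L2Y mm0 m0_cond). Qed.

Let L2_treatment_residual i : L2 D (fun z => Tf z i - e0 (Wf z) i).
Proof. exact: L2B (L2T i) (cond_mean_zero_L2 mW (L2T i) (me0 i) (e0_cond i)). Qed.

Let L2_Theta th i : Theta th -> L2 D (fun z => th (Wf z) i).
Proof.
move=> hth; apply: (L2_bounded D (c := M)); last by move=> z; exact: Theta_bounded.
exact: measurableT_comp (mTheta hth i) mW.
Qed.

Lemma L2_rloss_residual th : Theta th -> L2 D (rloss_residual th).
Proof.
move=> hth; apply: L2B L2_outcome_residual _; apply: L2_sum => i.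
exact: L2_mul_bounded (L2_treatment_residual i) (L2_Theta i hth).1
  (fun z => Theta_bounded hth (Wf z) i).
Qed.

Lemma Lrisk_trueE th : Theta th ->
  Lrisk D Wf Yf Tf th (m0, e0) = (mean D (fun z => rloss_residual th z ^+ 2))%:E.
Proof.
by move=> hth; rewrite /Lrisk L1_integralE //; exact: (L2_rloss_residual hth).2.
Qed.

Lemma treatment_residual_orth th th' : Theta th -> Theta th' ->
  (\int[D]_z (\sum_(i < d) (Tf z i - e0 (Wf z) i) *
                           (th (Wf z) i - th' (Wf z) i))%:E = 0)%E.
Proof.
move=> hth hth'.
have L1_term i : L1 D (fun z => (Tf z i - e0 (Wf z) i) * (th (Wf z) i - th' (Wf z) i)).
  exact: L2_mul (L2_treatment_residual i) (L2B (L2_Theta i hth) (L2_Theta i hth')).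
rewrite L1_integralE; last exact: L1_sum.
rewrite mean_sum // big1 // => i _.
apply: (cond_mean_zero_mean mW (e0_cond i) (h := fun w => th w i - th' w i)) => //.
by apply: measurable_funB; exact: mTheta.
Qed.

Lemma rloss_residual_orth th (h : Wt -> R) : Theta th -> measurable_fun setT h ->
  L2 D (fun z => h (Wf z)) -> mean D (fun z => rloss_residual th z * h (Wf z)) = 0.
Proof.
move=> hth mh L2h.
have L1_term i : L1 D (fun z => (Tf z i - e0 (Wf z) i) * (th (Wf z) i * h (Wf z))).
  apply: L2_mul (L2_treatment_residual i) _; under eq_fun do rewrite mulrC.
  exact: L2_mul_bounded L2h (L2_Theta i hth).1 (fun z => Theta_bounded hth (Wf z) i).
have L1_outcome : L1 D (fun z => (Yf z - m0 (Wf z)) * h (Wf z)).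
  exact: L2_mul L2_outcome_residual L2h.
have -> : (fun z => rloss_residual th z * h (Wf z)) = (fun z =>
    (Yf z - m0 (Wf z)) * h (Wf z) +
    - \sum_(i < d) (Tf z i - e0 (Wf z) i) * (th (Wf z) i * h (Wf z))).
  apply/funext => z; rewrite /rloss_residual mulrBl mulr_suml; congr (_ - _).
  by apply: eq_bigr => i _; rewrite mulrA.
rewrite meanD //; last exact/L1N/L1_sum.
rewrite meanN; last exact: L1_sum.
rewrite mean_sum // big1 ?oppr0 ?addr0; first exact: (cond_mean_zero_mean mW m0_cond mh).
move=> i _.
apply: (cond_mean_zero_mean mW (e0_cond i) (h := fun w => th w i * h w)) => //.
exact: measurable_funM (mTheta hth i) mh.
Qed.

Section nuisance.
Variables (m : Wt -> R) (e : Wt -> 'I_d -> R) (rate : R).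
Hypothesis mm : measurable_fun setT m.
Hypothesis me : forall i, measurable_fun setT (fun w => e w i).
Hypothesis L2dist_le : (L2dist D Wf (m, e) (m0, e0) <= rate%:E)%E.

Definition nuisance_sqerr z :=
  (m (Wf z) - m0 (Wf z)) ^+ 2 + \sum_(i < d) (e (Wf z) i - e0 (Wf z) i) ^+ 2.

Definition nuisance_bias th w := \sum_(i < d) (e w i - e0 w i) * th w i - (m w - m0 w).

Lemma nuisance_sqerr_ge0 z : 0 <= nuisance_sqerr z.
Proof. by rewrite addr_ge0 ?sqr_ge0 // sumr_ge0 // => i _; exact: sqr_ge0. Qed.

Lemma integral_nuisance_sqerr_le :
  (\int[D]_z (nuisance_sqerr z)%:E <= (rate ^+ 2)%:E)%E.
Proof.
have -> : (\int[D]_z (nuisance_sqerr z)%:E = L2dist D Wf (m, e) (m0, e0) `^ 2)%E.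
  rewrite poweR_Lnorm //; apply: eq_integral => z _ /=.
  rewrite ger0_norm ?sqrtr_ge0 // powR_mulrn ?sqrtr_ge0 // sqr_sqrtr //.
  exact: nuisance_sqerr_ge0.
have : (0 <= L2dist D Wf (m, e) (m0, e0))%E := Lnorm_ge0 _ _ _.
move: (L2dist _ _ _ _) L2dist_le => [n| |] //; rewrite !lee_fin => n_le n0.
by rewrite powR_mulrn //; nra.
Qed.

Lemma L1_nuisance_sqerr : L1 D nuisance_sqerr.
Proof.
have mdiff (f g : Wt -> R) : measurable_fun setT f -> measurable_fun setT g ->
    measurable_fun setT (fun z => (f (Wf z) - g (Wf z)) ^+ 2).
  by move=> mf mg; apply/measurable_funX/measurable_funB; exact: measurableT_comp.
apply/integrableP; split.
  apply/measurable_EFinP/measurable_funD; first exact: mdiff.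
  apply: (measurable_sum _ (h := fun i z => (e (Wf z) i - e0 (Wf z) i) ^+ 2)) => i.
  exact: (mdiff (fun w => e w i) (fun w => e0 w i) (me i) (me0 i)).
under eq_integral do rewrite /= ger0_norm ?nuisance_sqerr_ge0 //.
exact: le_lt_trans integral_nuisance_sqerr_le (ltry _).
Qed.

Lemma measurable_nuisance_bias th : Theta th -> measurable_fun setT (nuisance_bias th).
Proof.
move=> hth; apply: measurable_funB; last exact: measurable_funB.
apply: measurable_sum => i; apply: measurable_funM; last exact: mTheta.
exact: measurable_funB.
Qed.

Lemma nuisance_bias_sqr_le th z : Theta th ->
  nuisance_bias th (Wf z) ^+ 2 <= 2 * (1 + d%:R * M ^+ 2) * nuisance_sqerr z.
Proof. by move=> hth; apply: sqr_dot_sub_le => i; exact: Theta_bounded. Qed.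

Lemma L2_nuisance_bias th : Theta th -> L2 D (fun z => nuisance_bias th (Wf z)).
Proof.
move=> hth; have mb := measurableT_comp (measurable_nuisance_bias hth) mW.
split => //; apply: (L1_le (g := fun z => 2 * (1 + d%:R * M ^+ 2) * nuisance_sqerr z)).
- exact: measurable_funX.
- exact/L1Z/L1_nuisance_sqerr.
move=> z; rewrite ger0_norm ?sqr_ge0 // ger0_norm; first exact: nuisance_bias_sqr_le.
exact: le_trans (sqr_ge0 _) (nuisance_bias_sqr_le z hth).
Qed.

Lemma mean_nuisance_bias_le th : Theta th ->
  mean D (fun z => nuisance_bias th (Wf z) ^+ 2) <= 2 * (1 + d%:R * M ^+ 2) * rate ^+ 2.
Proof.
move=> hth; have c0 : 0 <= 2 * (1 + d%:R * M ^+ 2).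
  by rewrite mulr_ge0 // addr_ge0 // mulr_ge0 // sqr_ge0.
apply: (@le_trans _ _ (mean D (fun z => 2 * (1 + d%:R * M ^+ 2) * nuisance_sqerr z))).
  apply: le_mean; [exact: (L2_nuisance_bias hth).2 | exact/L1Z/L1_nuisance_sqerr |].
  by move=> z; exact: nuisance_bias_sqr_le.
rewrite meanZ ?ler_wpM2l //; last exact: L1_nuisance_sqerr.
rewrite -lee_fin -L1_integralE; first exact: integral_nuisance_sqerr_le.
exact: L1_nuisance_sqerr.
Qed.

Lemma Lrisk_nuisanceE th : Theta th ->
  Lrisk D Wf Yf Tf th (m, e) = (mean D (fun z => rloss_residual th z ^+ 2) +
                                mean D (fun z => nuisance_bias th (Wf z) ^+ 2))%:E.
Proof.
move=> hth.
have lossE z : rloss Wf Yf Tf th (m, e) z =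
    (rloss_residual th z + nuisance_bias th (Wf z)) ^+ 2.
  rewrite /rloss /rloss_residual /nuisance_bias /=; congr (_ ^+ 2).
  have -> : \sum_(i < d) (Tf z i - e (Wf z) i) * th (Wf z) i =
      \sum_(i < d) (Tf z i - e0 (Wf z) i) * th (Wf z) i -
      \sum_(i < d) (e (Wf z) i - e0 (Wf z) i) * th (Wf z) i.
    by rewrite -sumrB; apply: eq_bigr => i _; ring.
  ring.
have L2r := L2_rloss_residual hth; have L2b := L2_nuisance_bias hth.
rewrite /Lrisk; under eq_integral do rewrite lossE.
rewrite L1_integralE; last exact: (L2D L2r L2b).2.
rewrite mean_sqrD // rloss_residual_orth //; last exact: measurable_nuisance_bias.
by rewrite mulr0 addr0.
Qed.

Lemma excess_risk_transfer th th' r : Theta th -> Theta th' ->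
  (Lrisk D Wf Yf Tf th (m, e) - Lrisk D Wf Yf Tf th' (m, e) <= r%:E)%E ->
  (Lrisk D Wf Yf Tf th (m0, e0) - Lrisk D Wf Yf Tf th' (m0, e0)
     <= (r + 2 * (1 + d%:R * M ^+ 2) * rate ^+ 2)%:E)%E.
Proof.
move=> hth hth'; rewrite !Lrisk_nuisanceE // !Lrisk_trueE // -!EFinB !lee_fin.
have := mean_nuisance_bias_le hth'.
have := mean_ge0 D (fun z => sqr_ge0 (nuisance_bias th (Wf z))).
lra.
Qed.

End nuisance.
End rloss_decomposition.

Unset Implicit Arguments.

Theorem proposition3 (R : realType) (dW dZ dO : measure_display)
  (Wt : measurableType dW) (Z : measurableType dZ) (Om : measurableType dO)
  (d : nat) (D : probability Z R)
  (Wf : Z -> Wt) (Yf : Z -> R) (Tf : Z -> 'I_d -> R)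
  (theta0 : Wt -> 'I_d -> R) (f0 : Wt -> R) (e0 : Wt -> 'I_d -> R)
  (m0 : Wt -> R)
  (Theta : set (Wt -> 'I_d -> R)) (M : R) (thetas : Wt -> 'I_d -> R)
  (P : probability Om R) (n : nat) (S : Om -> nat -> Z)
  (gfit : seq Z -> nuisance d)
  (thfit : seq Z -> nuisance d -> (Wt -> 'I_d -> R))
  (Rate1 : seq Z -> R -> R)
  (Rate2 : seq Z -> R -> (Wt -> 'I_d -> R) -> nuisance d -> R) :
  (1 <= d)%N ->
  (* random variables W, Y, T of z ~ D; Y and T square integrable *)
  measurable_fun setT Wf -> measurable_fun setT Yf ->
  (forall i, measurable_fun setT (fun z => Tf z i)) ->
  D.-integrable setT (fun z => (Yf z ^+ 2)%:E) ->
  (forall i, D.-integrable setT (fun z => (Tf z i ^+ 2)%:E)) ->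
  (* Y = T^T theta0(W) + f0(W) + eps1,  E[eps1 | W, T] = 0 *)
  cond_mean_zero D (sigmaWT Wf Tf)
    (fun z => Yf z - (\sum_(i < d) Tf z i * theta0 (Wf z) i) - f0 (Wf z)) ->
  (* T = e0(W) + eps2,  E[eps2 | W] = 0 *)
  (forall i, measurable_fun setT (fun w => e0 w i)) ->
  (forall i, cond_mean_zero D (sigmaW Wf) (fun z => Tf z i - e0 (Wf z) i)) ->
  (* m0(w) = E[Y | W = w] *)
  measurable_fun setT m0 ->
  cond_mean_zero D (sigmaW Wf) (fun z => Yf z - m0 (Wf z)) ->
  (* the class Theta: measurable, bounded by M *)
  (forall th, Theta th -> forall i, measurable_fun setT (fun w => th w i)) ->
  (forall th, Theta th -> forall w i, `|th w i| <= M) ->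
  (* theta* in argmin_{theta in Theta} L_D(theta, m0, e0) *)
  Theta thetas ->
  (forall th, Theta th ->
     (Lrisk D Wf Yf Tf thetas (m0, e0) <= Lrisk D Wf Yf Tf th (m0, e0))%E) ->
  (* i.i.d. sample *)
  iid_sample P D S n ->
  (* nuisance fitting on S1 *)
  (forall s, measurable_fun setT (gfit s).1 /\
             forall i, measurable_fun setT (fun w => (gfit s).2 w i)) ->
  (forall delta, 0 < delta < 1 ->
     wp_atleast P delta [set w |
       (L2dist D Wf (gfit (firsthalf S n w)) (m0, e0)
          <= (Rate1 (firsthalf S n w) delta)%:E)%E]) ->
  (* theta fitting on S2 using g *)
  (forall s g, Theta (thfit s g)) ->
  (forall delta, 0 < delta < 1 ->
     wp_atleast P delta [set w |
       let g := gfit (firsthalf S n w) in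
       let th := thfit (secondhalf S n w) g in
       (Lrisk D Wf Yf Tf th g - Lrisk D Wf Yf Tf thetas g
          <= (Rate2 (secondhalf S n w) delta th g)%:E)%E]) ->
  forall delta, 0 < delta < 1 ->
    wp_atleast P delta [set w |
      let g := gfit (firsthalf S n w) in
      let th := thfit (secondhalf S n w) g in
      let a := (\int[D]_z (\sum_(i < d) (Tf z i - e0 (Wf z) i) *
                             (th (Wf z) i - thetas (Wf z) i))%:E)%E in
      (a * a <= Lrisk D Wf Yf Tf th (m0, e0) - Lrisk D Wf Yf Tf thetas (m0, e0))%E /\
      (Lrisk D Wf Yf Tf th (m0, e0) - Lrisk D Wf Yf Tf thetas (m0, e0)
        <= (Rate2 (secondhalf S n w) (delta / 2) th g +
            2 * (1 + d%:R * M ^+ 2) * (Rate1 (firsthalf S n w) (delta / 2)) ^+ 2)%:E)%E].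
Proof.
move=> _ mW mY mT iY2 iT2 _ me0 e0_cond mm0 m0_cond mTheta Theta_bounded
  Theta_thetas thetas_min _ mgfit gfit_rate thfit_Theta thfit_rate
  delta /andP[delta_gt0 delta_lt1].
have L2Y : L2 D Yf := conj mY iY2.
have L2T i : L2 D (fun z => Tf z i) := conj (mT i) (iT2 i).
have delta2 : 0 < delta / 2 < 1 by apply/andP; split; lra.
have [F1 [mF1 PF1 F1_rate]] := gfit_rate _ delta2.
have [F2 [mF2 PF2 F2_rate]] := thfit_rate _ delta2.
exists (F1 `&` F2); split; first exact: measurableI.
  by rewrite [X in 1 - X](splitr delta); exact: probability_setI_ge.
move=> w [/F1_rate /= + /F2_rate /=].
case: (gfit (firsthalf S n w)) (mgfit (firsthalf S n w)) => m e [mm me] rate1 rate2.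
have th_Theta := thfit_Theta (secondhalf S n w) (m, e).
rewrite (treatment_residual_orth mW L2T me0 e0_cond mTheta Theta_bounded
  th_Theta Theta_thetas) mule0.
split; first by rewrite subre_ge0 ?thetas_min // (Lrisk_trueE mW L2Y L2T me0 e0_cond
  mm0 m0_cond mTheta Theta_bounded th_Theta).
exact: (excess_risk_transfer mW L2Y L2T me0 e0_cond mm0 m0_cond mTheta
  Theta_bounded mm me rate1).
Qed.
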